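(* Let $d = 2$ and assume $\varphi$ is twice continuously differentiable. For $X \in \mathcal{M}$, the eigenvalues of the Riemannian Hessian of $f$ at $X$ (a self-adjoint operator on the $n$-dimensional space $\mathrm{T}_X\mathcal{M}$) are equal to the eigenvalues of $-L(M)$, where $M$ has entries $m_{ij} = w_{ij}\, h(x_i^\top x_j)$ with $h(t) = t\varphi'(t) - (1-t^2)\varphi''(t)$. Moreover, $X$ is a critical point of $f$ with negative semidefinite Riemannian Hessian if and only if $$X\,\mathrm{ddiag}(X^\top X A) = XA \quad\text{and}\quad \mathrm{ddiag}(X^\top X A) - A \odot X^\top X \succeq L(K),$$ where $A = W \odot \varphi'(X^\top X)$ and $K = W \odot \varphi''(X^\top X) \odot \big(\mathbf{1}\mathbf{1}^\top - (X^\top X)^{\odot 2}\big)$.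
   Context: $\mathcal{M} = (\mathbb{S}^{1})^n = \{X\in\mathbb{R}^{2\times n} : \text{columns } x_i \text{ unit norm}\}$, a Riemannian submanifold of $\mathbb{R}^{2\times n}$ with the Frobenius metric. $W$ is symmetric with nonnegative entries, $f(X) = \frac12\sum_{i,j} w_{ij}\varphi(x_i^\top x_j)$; $\varphi,\varphi',\varphi''$ act entrywise on matrices. For a symmetric $M \in \mathbb{R}^{n\times n}$, $L(M) = \mathrm{diag}(M\mathbf{1}) - M$ (graph Laplacian), where $\mathrm{diag}(v)$ is the diagonal matrix with diagonal $v$ and $\mathbf{1}$ is the all-ones vector. $\odot$ is the entrywise product, $(\cdot)^{\odot 2}$ entrywise squaring, $\mathrm{ddiag}$ zeroes off-diagonal entries, $\succeq$ is the Loewner order. *)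

From HB Require Import structures.
From mathcomp Require Import all_boot all_order all_algebra.
From mathcomp Require Import all_classical all_reals all_analysis.
Set Implicit Arguments. Unset Strict Implicit. Unset Printing Implicit Defensive.
Import Order.TTheory GRing.Theory Num.Theory numFieldNormedType.Exports.
Local Open Scope ring_scope.

Section Defs.
Variables (R : realType) (n : nat).

Definition onM (X : 'M[R]_(2, n)) : Prop :=
  forall i : 'I_n, \sum_(k < 2) X k i ^+ 2 = 1.

Definition frob (A B : 'M[R]_(2, n)) : R :=
  \sum_(k < 2) \sum_(i < n) A k i * B k i.

Definition tangent (X U : 'M[R]_(2, n)) : Prop :=
  forall i : 'I_n, \sum_(k < 2) X k i * U k i = 0.

Definition fcost (phi : R -> R) (W : 'M[R]_n) (Y : 'M[R]_(2, n)) : R :=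
  2^-1 * \sum_(i < n) \sum_(j < n) W i j * phi ((Y^T *m Y) i j).

Definition egrad (F : 'M[R]_(2, n) -> R) (Y : 'M[R]_(2, n)) : 'M[R]_(2, n) :=
  \matrix_(k, i) derive1 (fun t : R => F (Y + t *: delta_mx k i)) 0.

(* orthogonal projection onto T_Y M (for Y in M): Z - Y ddiag(Y^T Z);
   the formula is also used off M as a smooth extension *)
Definition proj (Y Z : 'M[R]_(2, n)) : 'M[R]_(2, n) :=
  \matrix_(k, i) (Z k i - (\sum_(l < 2) Y l i * Z l i) * Y k i).

Definition rgrad (F : 'M[R]_(2, n) -> R) (X : 'M[R]_(2, n)) : 'M[R]_(2, n) :=
  proj X (egrad F X).

(* Riemannian Hessian of a Riemannian submanifold of a Euclidean space:
   Hess f(X)[U] = Proj_X (D Gbar(X)[U]) where Gbar(Y) = Proj_Y(grad fbar(Y))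
   is a smooth extension of the Riemannian gradient. *)
Definition rhess (F : 'M[R]_(2, n) -> R) (X U : 'M[R]_(2, n)) : 'M[R]_(2, n) :=
  proj X (\matrix_(k, i) derive1 (fun t : R => rgrad F (X + t *: U) k i) 0).

Definition hadamard (m p : nat) (A B : 'M[R]_(m, p)) : 'M[R]_(m, p) :=
  \matrix_(i, j) (A i j * B i j).

Definition entrywise (m p : nat) (g : R -> R) (A : 'M[R]_(m, p)) : 'M[R]_(m, p) :=
  \matrix_(i, j) g (A i j).

Definition ddiag (A : 'M[R]_n) : 'M[R]_n := diag_mx (\row_i A i i).

Definition laplacian (M : 'M[R]_n) : 'M[R]_n :=
  diag_mx (\row_i \sum_(j < n) M i j) - M.

Definition psd (A : 'M[R]_n) : Prop :=
  forall v : 'cV[R]_n, 0 <= (v^T *m A *m v) 0 0.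
Definition loewner_ge (P Q : 'M[R]_n) : Prop := psd (P - Q).

End Defs.

Definition C2 (R : realType) (phi : R -> R) : Prop :=
  (forall x : R, derivable phi x 1) /\
  (forall x : R, derivable (derive1 phi) x 1) /\
  continuous (derive1 (derive1 phi)).

From Pilot Require Import Defs.
From HB Require Import structures.
From mathcomp Require Import all_boot all_order all_algebra.
From mathcomp Require Import all_classical all_reals all_analysis.
From mathcomp Require Import ring lra.
Import Order.TTheory GRing.Theory Num.Theory.
Set Implicit Arguments. Unset Strict Implicit. Unset Printing Implicit Defensive.
Local Open Scope ring_scope.

(* In the coordinates of R^(2 x n) the Euclidean gradient of f is Y A(Y), with
   A(Y) = W o phi'(Y^T Y), so the Riemannian gradient extends to the smooth field
   Y A(Y) - Y ddiag(Y^T Y A(Y)), and the Hessian is obtained by differentiating it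
   along X + tU and projecting.  On (S^1)^n a tangent vector has columns
   u_i = a_i J x_i, J the rotation by pi/2, and U |-> a is an isometry of T_X M onto
   R^n.  In these coordinates the Hessian form splits into one polynomial identity
   per pair of columns, where Lagrange's identity (x_i . J x_j)^2 = 1 - (x_i . x_j)^2
   produces the factor 1 - t^2 of h; summing gives <V, Hess f(X)[U]> = - b^T L(M) a
   for V with coordinates b.  Hence the Hessian in an orthonormal basis is an
   orthogonal conjugate of -L(M), and the second-order conditions follow from
   L(M) = ddiag(X^T X A) - A o X^T X - L(K). *)

Section DeriveMx.
Variable R : realType.
Implicit Types (x : R) (f g : R -> R).

Lemma is_derive1_comp f g x df :
  is_derive x 1 f df -> derivable g (f x) 1 ->
  is_derive x 1 (fun t => g (f t)) (derive1 g (f x) * df).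
Proof.
move=> [df1 dfE] dg; apply: DeriveDef.
  by apply/derivable1_diffP/differentiable_comp; exact/derivable1_diffP.
by rewrite -derive1E (derive1_comp df1 dg) [derive1 f x]derive1E dfE.
Qed.

Lemma is_derive_sumr n (F : 'I_n -> R -> R) x (dF : 'I_n -> R) :
  (forall i, is_derive x 1 (F i) (dF i)) ->
  is_derive x 1 (fun t => \sum_(i < n) F i t) (\sum_(i < n) dF i).
Proof. by move=> dF_F; rewrite -fct_sumE; exact: is_derive_sum. Qed.

Lemma is_derive1_sub f g x df dg :
  is_derive x 1 f df -> is_derive x 1 g dg ->
  is_derive x 1 (fun t => f t - g t) (df - dg).
Proof. by move=> dF dG; exact: is_deriveB. Qed.

Lemma is_derive1_mul f g x df dg :
  is_derive x 1 f df -> is_derive x 1 g dg ->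
  is_derive x 1 (fun t => f t * g t) (f x * dg + g x * df).
Proof. by move=> dF dG; exact: is_deriveM. Qed.

Lemma is_derive_affine (a b x : R) : is_derive x 1 (fun t => a + t * b) b.
Proof.
rewrite -[X in is_derive _ _ _ X](_ : 0 + (x * 0 + b * 1) = b); last by ring.
exact: (is_deriveD (is_derive_cst a x 1) (is_deriveM (is_derive_id x 1) (is_derive_cst b x 1))).
Qed.

Definition is_derive_mx m p (P : R -> 'M[R]_(m, p)) x (dP : 'M[R]_(m, p)) :=
  forall i j, is_derive x 1 (fun t => P t i j) (dP i j).

Variables (m p q : nat).
Implicit Types (P : R -> 'M[R]_(m, p)) (Q : R -> 'M[R]_(p, q)).

Lemma is_derive_mx_line (Y D : 'M[R]_(m, p)) x :
  is_derive_mx (fun t => Y + t *: D) x D.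
Proof.
move=> i j; rewrite (_ : (fun t => _) = fun t => Y i j + t * D i j).
  exact: is_derive_affine.
by apply/funext => t; rewrite !mxE.
Qed.

Lemma is_derive_mx_eq P x dP dP' :
  is_derive_mx P x dP -> dP = dP' -> is_derive_mx P x dP'.
Proof. by move=> + <-. Qed.

Lemma is_derive_mxB P1 P2 x dP1 dP2 :
  is_derive_mx P1 x dP1 -> is_derive_mx P2 x dP2 ->
  is_derive_mx (fun t => P1 t - P2 t) x (dP1 - dP2).
Proof.
move=> d1 d2 i j; rewrite (_ : (fun t => _) = fun t => P1 t i j - P2 t i j).
  by rewrite !mxE; exact: (is_derive1_sub (d1 i j) (d2 i j)).
by apply/funext => t; rewrite !mxE.
Qed.

Lemma is_derive_mx_mul P Q x dP dQ :
  is_derive_mx P x dP -> is_derive_mx Q x dQ ->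
  is_derive_mx (fun t => P t *m Q t) x (dP *m Q x + P x *m dQ).
Proof.
move=> dP_P dQ_Q i j.
rewrite (_ : (fun t => _) = fun t => \sum_l P t i l * Q t l j); last first.
  by apply/funext => t; rewrite mxE.
apply: is_derive_eq; first by apply: is_derive_sumr => l; exact: is_derive1_mul.
by rewrite !mxE -big_split; apply: eq_bigr => l _; rewrite addrC mulrC.
Qed.

Lemma is_derive_mx_tr P x dP :
  is_derive_mx P x dP -> is_derive_mx (fun t => (P t)^T) x dP^T.
Proof.
move=> dP_P i j; rewrite (_ : (fun t => _) = fun t => P t j i).
  by rewrite mxE.
by apply/funext => t; rewrite mxE.
Qed.

Lemma is_derive_mx_hadamard (C : 'M[R]_(m, p)) P x dP :
  is_derive_mx P x dP -> is_derive_mx (fun t => hadamard C (P t)) x (hadamard C dP).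
Proof.
move=> dP_P i j; rewrite (_ : (fun t => _) = fun t => cst (C i j) t * P t i j).
  rewrite mxE; apply: (is_derive_eq (is_derive1_mul (is_derive_cst _ _ _) (dP_P i j))).
  by rewrite mulr0 addr0.
by apply/funext => t; rewrite mxE.
Qed.

Lemma is_derive_mx_entrywise g P x dP :
  (forall a, derivable g a 1) -> is_derive_mx P x dP ->
  is_derive_mx (fun t => entrywise g (P t)) x (hadamard (entrywise (derive1 g) (P x)) dP).
Proof.
move=> dg dP_P i j; rewrite (_ : (fun t => _) = fun t => g (P t i j)).
  by rewrite !mxE; exact: is_derive1_comp.
by apply/funext => t; rewrite mxE.
Qed.

Lemma is_derive_mx_ddiag (P : R -> 'M[R]_m) x dP :
  is_derive_mx P x dP -> is_derive_mx (fun t => ddiag (P t)) x (ddiag dP).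
Proof.
move=> dP_P i j; rewrite (_ : (fun t => _) = fun t => P t i i *+ (i == j)).
  by rewrite !mxE; case: (i == j); [exact: dP_P | exact: is_derive_cst].
by apply/funext => t; rewrite !mxE.
Qed.

Lemma is_derive_mx_sum P x dP :
  is_derive_mx P x dP ->
  is_derive x 1 (fun t => \sum_i \sum_j P t i j) (\sum_i \sum_j dP i j).
Proof. by move=> dP_P; apply: is_derive_sumr => i; exact: is_derive_sumr. Qed.

Lemma derive1_mx P x dP :
  is_derive_mx P x dP -> \matrix_(i, j) derive1 (fun t => P t i j) x = dP.
Proof.
move=> dP_P; apply/matrixP => i j; have dPij := dP_P i j.
by rewrite mxE derive1E derive_val.
Qed.

End DeriveMx.

Lemma sum_ord2 (V : nmodType) (F : 'I_2 -> V) : \sum_(k < 2) F k = F ord0 + F ord_max.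
Proof. by rewrite big_ord_recl big_ord1; congr (_ + F _); apply: val_inj. Qed.

Lemma char_poly_conj (R : comNzRingType) n (P Q N : 'M[R]_n) :
  Q *m P = 1%:M -> char_poly (Q *m N *m P) = char_poly N.
Proof.
move=> QP1; pose polyC_mx := map_mx (@polyC R).
have QPc1 : polyC_mx _ _ Q *m polyC_mx _ _ P = 1%:M by rewrite -map_mxM QP1 map_mx1.
rewrite /char_poly; have -> : char_poly_mx (Q *m N *m P) = polyC_mx _ _ Q *m char_poly_mx N *m polyC_mx _ _ P.
  rewrite /char_poly_mx mulmxBr mulmxBl mul_mx_scalar -scalemxAl QPc1 scalemx1.
  by rewrite !map_mxM.
by rewrite !det_mulmx mulrAC -det_mulmx QPc1 det1 mul1r.
Qed.

Lemma mulmx_tr_colE (R : comNzRingType) m n (P Q : 'M[R]_(m, n)) (N : 'M[R]_m) i j :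
  (P^T *m N *m Q) i j = ((col i P)^T *m N *m col j Q) 0 0.
Proof. by rewrite tr_col -!row_mul colE mulmxA -colE !mxE. Qed.

Lemma sum_hadamard_sym (R : realType) n (S M : 'M[R]_n) :
  S^T = S -> \sum_i \sum_j hadamard S M i j = \tr (M *m S).
Proof.
move=> S_sym; apply: eq_bigr => i _; rewrite mxE; apply: eq_bigr => j _.
by rewrite !mxE mulrC -{1}S_sym mxE.
Qed.

Section Laplacian.
Variables (R : realType) (n : nat).
Implicit Types (A G M : 'M[R]_n) (u v : 'cV[R]_n).

Lemma laplacian_mulmx M v i : (laplacian M *m v) i 0 = \sum_j M i j * (v i 0 - v j 0).
Proof.
rewrite /laplacian mulmxBl mul_diag_mx !mxE mulr_suml -sumrB.
by apply: eq_bigr => j _; rewrite mulrBr.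
Qed.

Lemma laplacian_form M u v :
  (u^T *m laplacian M *m v) 0 0 = \sum_i u i 0 * \sum_j M i j * (v i 0 - v j 0).
Proof.
rewrite -mulmxA mxE; apply: eq_bigr => i _.
by rewrite laplacian_mulmx mxE.
Qed.

Lemma laplacianB M1 M2 : laplacian (M1 - M2) = laplacian M1 - laplacian M2.
Proof.
apply/matrixP => i j; rewrite !mxE.
rewrite (_ : \sum_k _ = \sum_k M1 i k - \sum_k M2 i k); last first.
  by rewrite -sumrB; apply: eq_bigr => k _; rewrite !mxE.
by case: (i == j); rewrite ?mulr1n ?mulr0n; ring.
Qed.

Lemma laplacian_hadamard A G :
  A^T = A -> laplacian (hadamard A G) = ddiag (G *m A) - hadamard A G.
Proof.
move=> A_sym; apply/matrixP => i j; rewrite !mxE; congr (_ *+ _ - _).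
by apply: eq_bigr => k _; rewrite !mxE mulrC -{1}A_sym mxE.
Qed.

End Laplacian.

Section FrobeniusProjection.
Variables (R : realType) (n : nat).
Implicit Types (X Y Z U V : 'M[R]_(2, n)).

Lemma frob_tr Y Z : frob Y Z = \tr (Y^T *m Z).
Proof.
rewrite /frob /mxtrace exchange_big; apply: eq_bigr => i _.
by rewrite mxE; apply: eq_bigr => k _; rewrite mxE.
Qed.

Lemma frob_delta Z k i : frob (delta_mx k i) Z = Z k i.
Proof.
rewrite /frob (bigD1 k) //= (bigD1 i) //= mxE !eqxx mul1r.
rewrite big1 ?addr0 => [|j /negbTE nji]; last by rewrite mxE nji andbF mul0r.
rewrite big1 ?addr0 // => l /negbTE nlk.
by rewrite big1 // => j _; rewrite mxE nlk mul0r.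
Qed.

Lemma projE Y Z : Defs.proj Y Z = Z - Y *m ddiag (Y^T *m Z).
Proof.
apply/matrixP => k i; rewrite /ddiag mul_mx_diag !mxE mulrC; congr (_ - _ * _).
by apply: eq_bigr => l _; rewrite mxE.
Qed.

Lemma frob_tangent_ddiag X V (D : 'M[R]_n) :
  tangent X V -> frob V (X *m ddiag D) = 0.
Proof.
move=> tV; rewrite frob_tr /ddiag mulmxA mul_mx_diag /mxtrace big1 // => i _.
rewrite !mxE (_ : \sum_k _ = 0) ?mul0r // -[RHS](tV i).
by apply: eq_bigr => k _; rewrite mxE mulrC.
Qed.

Lemma frobB Y Z1 Z2 : frob Y (Z1 - Z2) = frob Y Z1 - frob Y Z2.
Proof. by rewrite !frob_tr mulmxBr linearB. Qed.

Lemma frob_proj_tangent X V Z : tangent X V -> frob V (Defs.proj X Z) = frob V Z.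
Proof. by move=> tV; rewrite projE frobB frob_tangent_ddiag // subr0. Qed.

Lemma frob_hessian_expand V (P Q : 'M[R]_(2, n)) (A dA G : 'M[R]_n) :
  frob V (P *m A + Q *m dA - P *m ddiag (G *m A)) =
  \sum_i \sum_b \sum_k V k i * (P k b * A b i + Q k b * dA b i - P k i * (G i b * A b i)).
Proof.
rewrite /frob exchange_big; apply: eq_bigr => i _.
rewrite exchange_big; apply: eq_bigr => k _.
rewrite -mulr_sumr; congr (_ * _).
by rewrite /ddiag mul_mx_diag !mxE sumrB big_split -mulr_sumr.
Qed.

End FrobeniusProjection.

Section Circle.
Variable R : realType.

Lemma circle_tangentE (x0 x1 u0 u1 : R) :
  x0 ^+ 2 + x1 ^+ 2 = 1 -> x0 * u0 + x1 * u1 = 0 ->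
  u0 = - (x0 * u1 - x1 * u0) * x1 /\ u1 = (x0 * u1 - x1 * u0) * x0.
Proof.
move=> x_unit xu; split.
  transitivity (u0 * (x0 ^+ 2 + x1 ^+ 2) - x0 * (x0 * u0 + x1 * u1)); last by ring.
  by rewrite x_unit xu; ring.
transitivity (u1 * (x0 ^+ 2 + x1 ^+ 2) - x1 * (x0 * u0 + x1 * u1)); last by ring.
by rewrite x_unit xu; ring.
Qed.

Lemma circle_dot_tangent (x0 x1 u0 u1 v0 v1 : R) :
  x0 ^+ 2 + x1 ^+ 2 = 1 -> x0 * u0 + x1 * u1 = 0 -> x0 * v0 + x1 * v1 = 0 ->
  u0 * v0 + u1 * v1 = (x0 * u1 - x1 * u0) * (x0 * v1 - x1 * v0).
Proof.
move=> x_unit xu xv.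
transitivity ((u0 * v0 + u1 * v1) * (x0 ^+ 2 + x1 ^+ 2) - (x0 * u0 + x1 * u1) * (x0 * v0 + x1 * v1)).
  by rewrite x_unit xu; ring.
by ring.
Qed.

(* x, y stand for columns i, j of X, u and z for the columns i, j of U, v for
   column i of V, and g, d for the (i, j) entries of X^T X and X^T U + U^T X. *)
Lemma hessian_summand (x0 x1 y0 y1 u0 u1 z0 z1 v0 v1 w q1 q2 g d : R) :
  x0 ^+ 2 + x1 ^+ 2 = 1 -> y0 ^+ 2 + y1 ^+ 2 = 1 ->
  x0 * u0 + x1 * u1 = 0 -> y0 * z0 + y1 * z1 = 0 -> x0 * v0 + x1 * v1 = 0 ->
  g = x0 * y0 + x1 * y1 -> d = z0 * x0 + z1 * x1 + (y0 * u0 + y1 * u1) ->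
  v0 * (z0 * (w * q1) + y0 * (w * (q2 * d)) - u0 * (g * (w * q1))) +
  v1 * (z1 * (w * q1) + y1 * (w * (q2 * d)) - u1 * (g * (w * q1))) =
  (x0 * v1 - x1 * v0) *
  (w * (g * q1 - (1 - g ^+ 2) * q2) * ((y0 * z1 - y1 * z0) - (x0 * u1 - x1 * u0))).
Proof.
move=> x_unit y_unit xu yz xv -> ->.
have [u0E u1E] := circle_tangentE x_unit xu.
have [v0E v1E] := circle_tangentE x_unit xv.
have [z0E z1E] := circle_tangentE y_unit yz.
move: u0E u1E v0E v1E z0E z1E.
move: (x0 * u1 - x1 * u0) (x0 * v1 - x1 * v0) (y0 * z1 - y1 * z0) => a b c.
move=> -> -> -> -> -> ->.
(* Lagrange's identity (x0 y1 - x1 y0)^2 = |x|^2 |y|^2 - (x.y)^2 *)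
transitivity (b * w * (c * (x0 * y0 + x1 * y1) * q1
  - a * (x0 ^+ 2 + x1 ^+ 2) * (x0 * y0 + x1 * y1) * q1
  + ((x0 ^+ 2 + x1 ^+ 2) * (y0 ^+ 2 + y1 ^+ 2) - (x0 * y0 + x1 * y1) ^+ 2) * q2 * (a - c))).
  by ring.
rewrite x_unit y_unit; ring.
Qed.

End Circle.

Section CostDerivatives.
Variables (R : realType) (n : nat) (W : 'M[R]_n) (phi : R -> R).
Hypothesis W_sym : W^T = W.
Hypothesis phi_derivable : forall a, derivable phi a 1.
Hypothesis dphi_derivable : forall a, derivable (derive1 phi) a 1.
Implicit Types (X Y D U V : 'M[R]_(2, n)).

Definition Acoef Y := hadamard W (entrywise (derive1 phi) (Y^T *m Y)).

Definition dAcoef Y D :=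
  hadamard W (hadamard (entrywise (derive1 (derive1 phi)) (Y^T *m Y)) (D^T *m Y + Y^T *m D)).

Lemma Acoef_sym Y : (Acoef Y)^T = Acoef Y.
Proof.
have G_sym : (Y^T *m Y)^T = Y^T *m Y by rewrite trmx_mul trmxK.
by rewrite /Acoef -{1}W_sym -{1}G_sym; apply/matrixP => i j; rewrite !mxE.
Qed.

Lemma is_derive_gram Y D :
  is_derive_mx (fun t => (Y + t *: D)^T *m (Y + t *: D)) 0 (D^T *m Y + Y^T *m D).
Proof.
apply: (is_derive_mx_eq
  (is_derive_mx_mul (is_derive_mx_tr (is_derive_mx_line Y D 0)) (is_derive_mx_line Y D 0))).
by rewrite /= scale0r addr0.
Qed.

Lemma is_derive_fcost Y D :
  is_derive (0 : R) 1 (fun t => fcost phi W (Y + t *: D)) (frob D (Y *m Acoef Y)).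
Proof.
have dcost := is_derive_mx_sum
  (is_derive_mx_hadamard W (is_derive_mx_entrywise phi_derivable (is_derive_gram Y D))).
rewrite (_ : (fun t => _) = fun t => 2^-1 * \sum_i \sum_j
    hadamard W (entrywise phi ((Y + t *: D)^T *m (Y + t *: D))) i j); last first.
  apply/funext => t; congr (_ * _).
  by apply: eq_bigr => i _; apply: eq_bigr => j _; rewrite !mxE.
have dcost2 := is_derive1_mul (is_derive_cst (2^-1 : R) _ _) dcost.
apply: (is_derive_eq dcost2).
rewrite /cst (mulr0 (_ : R)) addr0 scale0r addr0.
(* both halves of the derivative of the Gram matrix give tr(D^T Y A), as A is symmetric *)
rewrite (eq_bigr (fun i => \sum_j hadamard (Acoef Y) (D^T *m Y + Y^T *m D) i j)); last first.
  by move=> i _; apply: eq_bigr => j _; rewrite !mxE mulrA.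
rewrite sum_hadamard_sym ?Acoef_sym // mulmxDl mxtraceD.
rewrite -[in X in _ + X]mxtrace_tr !trmx_mul trmxK Acoef_sym mxtrace_mulC mulmxA.
rewrite frob_tr -mulmxA mxtrace_mulC -mulmxA.
lra.
Qed.

Lemma egrad_fcost Y : egrad (fcost phi W) Y = Y *m Acoef Y.
Proof.
apply/matrixP => k i; have dcost := is_derive_fcost Y (delta_mx k i).
by rewrite mxE derive1E derive_val frob_delta.
Qed.

Lemma rgrad_fcost Y : rgrad (fcost phi W) Y = Y *m Acoef Y - Y *m ddiag (Y^T *m (Y *m Acoef Y)).
Proof. by rewrite /rgrad egrad_fcost projE. Qed.

Lemma is_derive_Acoef X U : is_derive_mx (fun t => Acoef (X + t *: U)) 0 (dAcoef X U).
Proof.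
apply: (is_derive_mx_eq
  (is_derive_mx_hadamard W (is_derive_mx_entrywise dphi_derivable (is_derive_gram X U)))).
by rewrite /= scale0r addr0.
Qed.

Lemma hessian_fcost X U V : tangent X V ->
  frob V (rhess (fcost phi W) X U) =
  frob V (U *m Acoef X + X *m dAcoef X U - U *m ddiag (X^T *m (X *m Acoef X))).
Proof.
move=> tV; rewrite /rhess.
set E := fun t => (X + t *: U) *m Acoef (X + t *: U).
have dE : is_derive_mx E 0 (U *m Acoef X + X *m dAcoef X U).
  apply: (is_derive_mx_eq (is_derive_mx_mul (is_derive_mx_line X U 0) (is_derive_Acoef X U))).
  by rewrite /= scale0r addr0.
have dRgrad : is_derive_mx (fun t => rgrad (fcost phi W) (X + t *: U)) 0
    (U *m Acoef X + X *m dAcoef X U -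
     (U *m ddiag (X^T *m (X *m Acoef X)) +
      X *m ddiag (U^T *m (X *m Acoef X) + X^T *m (U *m Acoef X + X *m dAcoef X U)))).
  rewrite (_ : (fun t => _) = fun t => E t - (X + t *: U) *m ddiag ((X + t *: U)^T *m E t)).
    have dD := is_derive_mx_ddiag (is_derive_mx_mul (is_derive_mx_tr (is_derive_mx_line X U 0)) dE).
    apply: (is_derive_mx_eq (is_derive_mxB dE (is_derive_mx_mul (is_derive_mx_line X U 0) dD))).
    by rewrite /E /= !scale0r !addr0.
  by apply/funext => t; rewrite rgrad_fcost.
rewrite (derive1_mx dRgrad) frob_proj_tangent // opprD addrA frobB.
by rewrite (frob_tangent_ddiag _ tV) subr0.
Qed.

End CostDerivatives.

(* For X on the manifold and U tangent at X, column i of U is [tcoord X U i 0]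
   times the rotated column (- X 1 i, X 0 i) (see circle_tangentE). *)
Definition tcoord (R : realType) n (X U : 'M[R]_(2, n)) : 'cV[R]_n :=
  \col_i (X ord0 i * U ord_max i - X ord_max i * U ord0 i).

Section TangentCoordinates.
Variables (R : realType) (n : nat) (X : 'M[R]_(2, n)).
Hypothesis X_on : onM X.

Lemma frob_tangent U V : tangent X U -> tangent X V ->
  frob U V = ((tcoord X U)^T *m tcoord X V) 0 0.
Proof.
move=> tU tV; rewrite /frob exchange_big mxE; apply: eq_bigr => i _.
rewrite sum_ord2 !mxE; apply: circle_dot_tangent.
- by rewrite -(X_on i) sum_ord2.
- by rewrite -(tU i) sum_ord2.
- by rewrite -(tV i) sum_ord2.
Qed.

Lemma tcoord_surj (v : 'cV[R]_n) : exists2 U, tangent X U & tcoord X U = v.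
Proof.
exists (\matrix_(k, i) (v i 0 * (if k == ord0 then - X ord_max i else X ord0 i))).
  by move=> i; rewrite sum_ord2 !mxE /=; ring.
apply/matrixP => i j; rewrite !mxE /= (ord1 j).
transitivity (v i 0 * (X ord0 i ^+ 2 + X ord_max i ^+ 2)); first by ring.
by have := X_on i; rewrite sum_ord2 => ->; rewrite mulr1.
Qed.

End TangentCoordinates.

Definition hphi (R : realType) (phi : R -> R) (t : R) :=
  t * derive1 phi t - (1 - t ^+ 2) * derive1 (derive1 phi) t.

Section HessianSpectrum.
Variables (R : realType) (n : nat) (W : 'M[R]_n) (phi : R -> R) (X : 'M[R]_(2, n)).
Hypothesis W_sym : W^T = W.
Hypothesis phi_derivable : forall a, derivable phi a 1.
Hypothesis dphi_derivable : forall a, derivable (derive1 phi) a 1.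
Hypothesis X_on : onM X.

Local Notation M := (hadamard W (entrywise (hphi phi) (X^T *m X))).

Lemma hessian_tangent U V : tangent X U -> tangent X V ->
  frob V (rhess (fcost phi W) X U) =
  - ((tcoord X V)^T *m laplacian M *m tcoord X U) 0 0.
Proof.
move=> tU tV.
rewrite hessian_fcost // mulmxA frob_hessian_expand laplacian_form -sumrN.
apply: eq_bigr => i _; rewrite -mulrN -sumrN mulr_sumr; apply: eq_bigr => b _.
have W_symE : W b i = W i b by rewrite -[in LHS]W_sym mxE.
rewrite /Acoef /dAcoef; set G := X^T *m X.
have G_symE : G b i = G i b by rewrite /G -[in LHS](trmxK X) -trmx_mul mxE trmxK.
have G_ibE : G i b = X ord0 i * X ord0 b + X ord_max i * X ord_max b.
  by rewrite /G mxE sum_ord2 !mxE.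
clearbody G. (* keeps mxE from unfolding the Gram entries *)
rewrite -[in RHS]mulrN [in RHS]opprB sum_ord2 !mxE G_symE W_symE /hphi.
apply: hessian_summand.
- by rewrite -(X_on i) sum_ord2.
- by rewrite -(X_on b) sum_ord2.
- by rewrite -(tU i) sum_ord2.
- by rewrite -(tU b) sum_ord2.
- by rewrite -(tV i) sum_ord2.
- exact: G_ibE.
- by rewrite !sum_ord2 !mxE.
Qed.

Lemma hessian_char_poly (U : 'I_n -> 'M[R]_(2, n)) :
  (forall i, tangent X (U i)) -> (forall i j, frob (U i) (U j) = (i == j)%:R) ->
  char_poly (\matrix_(i, j) frob (U i) (rhess (fcost phi W) X (U j))) =
  char_poly (- laplacian M).
Proof.
move=> tU U_orth; pose P := \matrix_(a, j) tcoord X (U j) a 0.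
have colP j : col j P = tcoord X (U j) by apply/matrixP => a b; rewrite !mxE.
have P_orth : P^T *m P = 1%:M.
  apply/matrixP => i j; rewrite -[P^T]mulmx1 mulmx_tr_colE mulmx1 !colP.
  by rewrite -frob_tangent // U_orth mxE.
rewrite -(char_poly_conj (- laplacian M) P_orth).
congr char_poly; apply/matrixP => i j.
by rewrite mxE mulmx_tr_colE !colP hessian_tangent // mulmxN mulNmx [RHS]mxE.
Qed.

Lemma hessian_nsd_iff :
  (forall U, tangent X U -> frob U (rhess (fcost phi W) X U) <= 0) <-> psd (laplacian M).
Proof.
split=> [nsd v | psdL U tU].
  have [U tU <-] := tcoord_surj X_on v.
  by rewrite -oppr_le0 -hessian_tangent // nsd.
by rewrite hessian_tangent // oppr_le0 psdL.
Qed.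

End HessianSpectrum.

Theorem mainTheorem10 (R : realType) (n : nat) (W : 'M[R]_n) (phi : R -> R)
    (X : 'M[R]_(2, n)) :
  W^T = W -> (forall i j, 0 <= W i j) -> C2 phi -> onM X ->
  let f := fcost phi W in
  let G := X^T *m X in
  let h := fun t : R => t * derive1 phi t - (1 - t ^+ 2) * derive1 (derive1 phi) t in
  let M := hadamard W (entrywise h G) in
  let A := hadamard W (entrywise (derive1 phi) G) in
  let K := hadamard (hadamard W (entrywise (derive1 (derive1 phi)) G))
                    (const_mx 1 - hadamard G G) in
  (forall U : 'I_n -> 'M[R]_(2, n),
     (forall i, tangent X (U i)) ->
     (forall i j, frob (U i) (U j) = (i == j)%:R) ->
     char_poly (\matrix_(i, j) frob (U i) (rhess f X (U j)))
     = char_poly (- laplacian M)) /\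
  ((rgrad f X = 0 /\ (forall U, tangent X U -> frob U (rhess f X U) <= 0)) <->
   (X *m ddiag (G *m A) = X *m A /\
    loewner_ge (ddiag (G *m A) - hadamard A G) (laplacian K))).
Proof.
move=> W_sym _ [phi_d1 [phi_d2 _]] X_on f G h M A K.
split; first exact: hessian_char_poly.
have gradE : rgrad f X = X *m A - X *m ddiag (G *m A) by rewrite rgrad_fcost // mulmxA.
have lapM : laplacian M = ddiag (G *m A) - hadamard A G - laplacian K.
  rewrite -laplacian_hadamard ?Acoef_sym // -laplacianB; congr laplacian.
  by apply/matrixP => i j; rewrite !mxE /h; ring.
have nsdE := hessian_nsd_iff W_sym phi_d1 phi_d2 X_on.
rewrite /loewner_ge -lapM gradE; split=> -[grad0 hess].
  by split; [apply/eqP; rewrite eq_sym -subr_eq0 grad0 | exact/nsdE].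
by split; [rewrite grad0 subrr | exact/nsdE].
Qed.
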